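(* Let $\mathcal A=(Q,T,\delta,X)$ be an OCAPT with initial state $q_0$ and target set $F\subseteq Q$. If there is a valuation $V$ such that all infinite $V$-runs of $\mathcal A$ from $(q_0,0)$ reach $F$, then there is a valuation $V'$ with $V'(x)=\exp(|\mathcal A|^{\mathcal O(1)})$ (i.e. bounded by $2^{p(|\mathcal A|)}$ for a fixed polynomial $p$) for all $x\in X$, such that all infinite $V'$-runs of $\mathcal A$ from $(q_0,0)$ reach $F$.
   Context: An OCAPT is $\mathcal A=(Q,T,\delta,X)$ with finite state set $Q$, finite parameter set $X$, transitions $T\subseteq Q\times Q$, and $\delta:T\to Op$ where $Op$ consists of updates $+a$ with $a\in\{-1,0,1\}$, the zero test $=0$, and parametric tests $=x$, $\ge x$ ($x\in X$); no parametric updates. A valuation is $V:X\to\mathbb{N}$. A $V$-run is a sequence of configurations $(q_i,c_i)\in Q\times\mathbb{N}$ with $(q_i,q_{i+1})\in T$ such that tests hold ($c_i=0$, $c_i=V(x)$, $c_i\ge V(x)$, with $c_{i+1}=c_i$) and updates are applied ($c_{i+1}=c_i+a$). A run reaches $F$ if some state in it belongs to $F$. *)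

From mathcomp Require Import all_boot.
Set Implicit Arguments. Unset Strict Implicit. Unset Printing Implicit Defensive.

Inductive Op (X : Type) : Type :=
| OInc
| ODec
| ONop
| OZero
| OEq of X
| OGe of X.

(* An OCAPT A = (Q, T, delta, X): finite state type Q, finite parameter type X;
   [ocapt_delta A q q' = Some op] iff (q,q') \in T and delta (q,q') = op. *)
Record OCAPT (Q X : finType) := mkOCAPT { ocapt_delta : Q -> Q -> option (Op X) }.

Definition ocapt_size (Q X : finType) (A : OCAPT Q X) : nat :=
  #|Q| + #|[pred p : Q * Q | isSome (ocapt_delta A p.1 p.2)]| + #|X|.

Definition valuation (X : finType) := X -> nat.

Definition op_step (X : finType) (V : valuation X) (op : Op X) (c c' : nat) : Prop :=
  match op with
  | OInc => c' = c.+1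
  | ODec => c = c'.+1
  | ONop => c' = c
  | OZero => c = 0 /\ c' = c
  | OEq x => c = V x /\ c' = c
  | OGe x => V x <= c /\ c' = c
  end.

Definition step (Q X : finType) (A : OCAPT Q X) (V : valuation X)
  (s s' : Q * nat) : Prop :=
  exists op, ocapt_delta A s.1 s'.1 = Some op /\ op_step V op s.2 s'.2.

Definition inf_run_from (Q X : finType) (A : OCAPT Q X) (V : valuation X)
  (q0 : Q) (r : nat -> Q * nat) : Prop :=
  r 0 = (q0, 0) /\ forall i, step A V (r i) (r i.+1).

Definition reaches (Q : finType) (F : {set Q}) (r : nat -> Q * nat) : Prop :=
  exists i, (r i).1 \in F.

Definition all_inf_runs_reach (Q X : finType) (A : OCAPT Q X) (V : valuation X)
  (q0 : Q) (F : {set Q}) : Prop :=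
  forall r, inf_run_from A V q0 r -> reaches F r.

From mathcomp Require Import all_boot zify.
Set Implicit Arguments. Unset Strict Implicit.

(* Every F-avoiding run prefix of length N = |Q|(|X|+1)(|Q|+2) can be pumped into an
   infinite F-avoiding run.  If the counter stays below (|X|+1)(|Q|+2), some
   configuration repeats.  Otherwise the counter crosses one of the |X|+1 blocks of
   |Q|+2 consecutive values, chosen to contain no parameter value; two of the last
   visits before the crossing to |Q|+1 levels of that block share a state, and the
   segment between them only sees counter values that no test distinguishes, so it
   can be replayed at ever higher counter values.  After t steps the counter is at
   most t, so truncating V at N+1 changes no test during the first N steps: an
   infinite run for the truncated valuation that avoided F for N steps would yield
   an F-avoiding infinite V-run. *)

Lemma discrete_ivt (f : nat -> nat) t1 t2 v :
  (forall t, t1 <= t < t2 -> f t.+1 <= (f t).+1) ->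
  t1 <= t2 -> f t1 <= v <= f t2 -> exists2 t, t1 <= t <= t2 & f t = v.
Proof.
elim: t2 => [|t2 IH] slow le12 /andP[lo hi].
  by exists 0; move: le12 lo hi; rewrite leqn0 => /eqP->; lia.
case: (eqVneq (f t2.+1) v) => [fv|fv]; first by exists t2.+1; lia.
have le12' : t1 <= t2.
  by move: le12; rewrite leq_eqVlt => /orP[/eqP e|//]; move: lo fv; rewrite e; lia.
have [t ht ft] : exists2 t, t1 <= t <= t2 & f t = v.
  apply: IH => //; first by move=> t ht; apply: slow; lia.
  by have := slow t2; lia.
by exists t; first lia.
Qed.

Lemma last_visit (f : nat -> nat) s k :
  (forall t, t < s -> f t.+1 <= (f t).+1) -> f 0 <= k <= f s ->
  exists u, [/\ u <= s, f u = k & forall t, u < t <= s -> k < f t].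
Proof.
move=> slow bnd.
have slow' t1 : forall t, t1 <= t < s -> f t.+1 <= (f t).+1.
  by move=> t /andP[_]; apply: slow.
have visited : exists t, (t <= s) && (f t == k).
  have [t ht ft] := discrete_ivt (slow' 0) (leq0n s) bnd.
  by exists t; rewrite ft eqxx andbT; lia.
have le_s t : (t <= s) && (f t == k) -> t <= s by case/andP.
case: (ex_maxnP visited le_s) => u /andP[us /eqP fu] umax.
exists u; split=> // t /andP[ut ts]; rewrite ltnNge; apply/negP => ftk.
have [t' ht' ft'] : exists2 t', t <= t' <= s & f t' = k.
  by apply: discrete_ivt (slow' t) ts _; lia.
by have := umax t'; rewrite ft' eqxx andbT; lia.
Qed.

Lemma first_reach (f : nat -> nat) s b :
  b <= f s -> exists s0, [/\ s0 <= s, b <= f s0 & forall t, t < s0 -> f t < b].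
Proof.
move=> reach; have reached : exists t, b <= f t by exists s.
case: (ex_minnP reached) => s0 bs0 s0min; exists s0; split=> //; first exact: s0min.
by move=> t; apply: contraTT; rewrite -!leqNgt => /s0min.
Qed.

Lemma exists_small_notin (s : seq nat) : exists2 j, j <= size s & j \notin s.
Proof.
case: (boolP (all (mem s) (iota 0 (size s).+1))) => [/allP cover|/allPn[j]].
  by have := uniq_leq_size (iota_uniq 0 (size s).+1) cover; rewrite size_iota ltnn.
by rewrite mem_iota add0n ltnS => ??; exists j.
Qed.

Lemma pigeonhole_ord n (T : finType) (f : 'I_n -> T) :
  #|T| < n -> exists i j : 'I_n, i < j /\ f i = f j.
Proof.
move=> small; have /injectivePn[i [j neq_ij fij]] : ~~ injectiveb f.
  by apply/injectiveP => /leq_card; rewrite card_ord leqNgt small.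
case: (ltngtP i j) => [lt_ij|lt_ji|/val_inj eq_ij]; first by exists i, j.
  by exists j, i.
by rewrite eq_ij eqxx in neq_ij.
Qed.

Section Steps.
Variables (Q X : finType) (A : OCAPT Q X) (W : valuation X).
Local Notation step := (step A W).

Definition shift (e : nat) (s : Q * nat) : Q * nat := (s.1, s.2 + e).

Lemma shift0 s : shift 0 s = s.
Proof. by case: s => q c; rewrite /shift addn0. Qed.

Lemma shiftD e1 e2 s : shift (e1 + e2) s = shift e2 (shift e1 s).
Proof. by rewrite /shift addnA. Qed.

Definition neutral (c : nat) := (c != 0) && (c \notin codom W).

Lemma op_step_shift op c c' e :
  op_step W op c c' -> c' != c \/ neutral c -> op_step W op (c + e) (c' + e).
Proof.
case: op => [||||x|x] /=; try by move=> ->.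
- by move=> [-> ->] [/eqP|/andP[]].
- by move=> [-> ->] [/eqP|/andP[_ /negP[]]]; last exact: codom_f.
- by move=> [le_xc ->] _; split=> //; apply: leq_trans le_xc (leq_addr _ _).
Qed.

Lemma step_shift s s' e :
  step s s' -> s'.2 != s.2 \/ neutral s.2 -> step (shift e s) (shift e s').
Proof. by move=> [op [trans opst]] moving; exists op; split; last exact: op_step_shift. Qed.

Lemma step_counter_le s s' : step s s' -> s'.2 <= s.2.+1.
Proof. by case=> -[||||x|x] [_] /=; lia. Qed.

Definition run_upto (r : nat -> Q * nat) (n : nat) :=
  forall t, t < n -> step (r t) (r t.+1).

Lemma run_upto_le r m n : m <= n -> run_upto r n -> run_upto r m.
Proof. by move=> le_mn run t lt_tm; apply: run; apply: leq_trans le_mn. Qed.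

Lemma run_counter_le r n : (r 0).2 = 0 -> run_upto r n -> forall t, t <= n -> (r t).2 <= t.
Proof.
move=> r0 run; elim=> [|t IH] le_tn; first by rewrite r0.
by have := step_counter_le (run t le_tn); have := IH (ltnW le_tn); lia.
Qed.

Definition pumpable (r : nat -> Q * nat) (u u' d : nat) :=
  [/\ u < u', r u' = shift d (r u) &
      forall n t, u <= t < u' -> step (shift (n * d) (r t)) (shift (n * d) (r t.+1))].

Section Lasso.
Variables (r : nat -> Q * nat) (u u' d : nat).
Hypotheses (prefix : run_upto r u) (loop : pumpable r u u' d).

Local Notation p := (u' - u).

Definition lasso (t : nat) : Q * nat :=
  if t < u then r t else shift ((t - u) %/ p * d) (r (u + (t - u) %% p)).

Lemma lasso0 : lasso 0 = r 0.
Proof.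
rewrite /lasso; case: ifP => [//|/negbT]; rewrite -leqNgt leqn0 => /eqP->.
by rewrite sub0n div0n mod0n mul0n shift0.
Qed.

Lemma lasso_step t : step (lasso t) (lasso t.+1).
Proof.
have [lt_uu' last_u' seg] := loop; have p_gt0 : 0 < p by rewrite subn_gt0.
rewrite /lasso; case: (ltnP t.+1 u) => [lt_tu|le_ut].
  by rewrite (ltnW lt_tu); apply: prefix; apply: ltnW.
case: ltnP => [lt_tu|le_ut'].
  have eu : u = t.+1 by lia.
  by rewrite eu subnn div0n mod0n mul0n addn0 shift0; apply: prefix; rewrite -eu.
rewrite subSn // modnS divnS //; set k := t - u.
have in_loop : u <= u + k %% p < u' by rewrite leq_addr /= -ltn_subRL ltn_pmod.
case: ifP => dvd_p /=; last by rewrite addnS; apply: seg.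
have wrap : (u + k %% p).+1 = u'.
  suff: (k %% p).+1 = p by lia.
  apply/eqP; rewrite eqn_leq ltn_pmod //=; apply: dvdn_leq => //.
  by move: dvd_p; rewrite {1}(divn_eq k p) -addnS dvdn_addr // dvdn_mull.
by rewrite addn0 mulnDl mul1n shiftD -last_u' -[in r u']wrap; apply: seg.
Qed.

Lemma lasso_state t : exists2 t', t' < u' & (lasso t).1 = (r t').1.
Proof.
have [lt_uu' _ _] := loop; rewrite /lasso; case: ltnP => [lt_tu|_].
  by exists t => //; apply: ltn_trans lt_uu'.
by exists (u + (t - u) %% p) => //; rewrite -ltn_subRL ltn_pmod // subn_gt0.
Qed.

End Lasso.

Lemma not_all_reach_of_pumpable q0 (F : {set Q}) r u u' d :
  r 0 = (q0, 0) -> run_upto r u -> pumpable r u u' d ->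
  (forall t, t < u' -> (r t).1 \notin F) -> ~ all_inf_runs_reach A W q0 F.
Proof.
move=> r0 prefix loop avoid all_reach.
have [|t] := all_reach (lasso r u u' d).
  by split; [rewrite lasso0 | exact: lasso_step prefix loop].
by have [t' /avoid + ->] := lasso_state loop t; apply/negP.
Qed.

Lemma neutral_of_free_block H c :
  0 < c -> c %/ H \notin codom (fun x => W x %/ H) -> neutral c.
Proof.
move=> c_gt0 free; rewrite /neutral -lt0n c_gt0 /=.
by apply: contra free => /codomP[x ->]; apply/codomP; exists x.
Qed.

Lemma bounded_prefix_pumpable r m :
  run_upto r (#|Q| * m) -> (forall t, t <= #|Q| * m -> (r t).2 < m) ->
  exists u u', u' <= #|Q| * m /\ pumpable r u u' 0.
Proof.
move=> run low.
pose cfg (t : 'I_((#|Q| * m).+1)) : Q * 'I_m := ((r t).1, Ordinal (low t (ltn_ord t))).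
have [i [j [lt_ij]]] : exists i j : 'I_((#|Q| * m).+1), i < j /\ cfg i = cfg j.
  by apply: pigeonhole_ord; rewrite card_prod card_ord.
move/(congr1 (fun c => (c.1, val c.2))) => [same_state same_counter].
exists i, j; split; first by rewrite -ltnS.
split=> // [|n t /andP[_ lt_tj]].
  by rewrite shift0 [r j]surjective_pairing -same_state -same_counter -surjective_pairing.
by rewrite muln0 !shift0; apply: run; apply: leq_trans lt_tj _; rewrite -ltnS.
Qed.

Lemma climbing_prefix_pumpable r s :
  (r 0).2 = 0 -> run_upto r s -> #|X|.+1 * #|Q|.+2 <= (r s).2 ->
  exists u u' d, u' <= s /\ pumpable r u u' d.
Proof.
move=> r0 run high; set H := #|Q|.+2.
have slow t : t < s -> (r t.+1).2 <= (r t).2.+1 by move/run/step_counter_le.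
(* The block [j*H, j*H + H) contains no parameter value. *)
have [j le_jX free] := exists_small_notin (codom (fun x => W x %/ H)).
rewrite size_codom in le_jX; set a := j * H.
have [s0 [le_s0s reach_s0 below_s0]] : exists s0,
    [/\ s0 <= s, a + #|Q|.+1 <= (r s0).2 & forall t, t < s0 -> (r t).2 < a + #|Q|.+1].
  by apply: first_reach; apply: leq_trans high; have := leq_mul le_jX (leqnn H); lia.
have visits (i : 'I_#|Q|.+1) : exists u, [/\ u <= s0, (r u).2 = a + i
    & forall t, u < t <= s0 -> a + i < (r t).2].
  by apply: last_visit => [t lt_ts0|]; [apply: slow; lia | have := ltn_ord i; lia].
have [lv lvP] := fin_all_exists visits.
have [i [i' [lt_ii' same_state]]] :
    exists i i' : 'I_#|Q|.+1, i < i' /\ (r (lv i)).1 = (r (lv i')).1.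
  by apply: pigeonhole_ord; exact: ltnSn.
have [le_lv lv_lvl lv_last] := lvP i; have [le_lv' lv'_lvl lv'_last] := lvP i'.
have lt_lv : lv i < lv i'.
  rewrite ltnNge leq_eqVlt; apply/negP => /orP[/eqP eq_lv|lt_lv'].
    by move: lv'_lvl; rewrite eq_lv lv_lvl; lia.
  by have := lv'_last (lv i); rewrite lt_lv' le_lv lv_lvl => /(_ isT); lia.
exists (lv i), (lv i'), (i' - i); split; first lia; split=> // [|n t /andP[le_t lt_t]].
  rewrite [r (lv i')]surjective_pairing /shift -same_state lv'_lvl lv_lvl.
  by congr (_, _); lia.
apply: step_shift; first by apply: run; lia.
case: (eqVneq t (lv i)) => [->|ne_t]; first by left; have := lv_last (lv i).+1; lia.
right; apply: (@neutral_of_free_block H); first by have := lv_last t; lia.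
suff -> : (r t).2 %/ H = j by [].
have [lo hi] : a <= (r t).2 /\ (r t).2 < a + H.
  by have := lv_last t; have := below_s0 t; lia.
by rewrite -(subnKC lo) divnMDl // divn_small ?addn0 //; lia.
Qed.

Definition pump_bound := #|Q| * (#|X|.+1 * #|Q|.+2).

Lemma run_prefix_pumpable r :
  (r 0).2 = 0 -> run_upto r pump_bound ->
  exists u u' d, u' <= pump_bound /\ pumpable r u u' d.
Proof.
move=> r0 run.
case: (boolP [exists t : 'I_pump_bound.+1, #|X|.+1 * #|Q|.+2 <= (r t).2]).
  case/existsP=> t high; have le_t : t <= pump_bound := ltn_ord t.
  have [u [u' [d [le_u't loop]]]] := climbing_prefix_pumpable r0 (run_upto_le le_t run) high.
  by exists u, u', d; split=> //; apply: leq_trans le_u't le_t.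
rewrite negb_exists => /forallP low.
have [|u [u' loop]] := bounded_prefix_pumpable run; last by exists u, u', 0.
by move=> t le_t; have := low (Ordinal (le_t : t < pump_bound.+1)); rewrite ltnNge.
Qed.

Lemma not_all_reach_of_avoiding_prefix q0 (F : {set Q}) r :
  r 0 = (q0, 0) -> run_upto r pump_bound ->
  (forall t, t <= pump_bound -> (r t).1 \notin F) -> ~ all_inf_runs_reach A W q0 F.
Proof.
move=> r0 run avoid.
have [u [u' [d [le_u' loop]]]] := run_prefix_pumpable (congr1 snd r0) run.
have [lt_uu' _ _] := loop.
apply: not_all_reach_of_pumpable r0 (run_upto_le _ run) loop _ => [|t lt_t]; first lia.
by apply: avoid; lia.
Qed.

End Steps.

Lemma op_step_truncate (X : finType) (V : valuation X) b op c c' :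
  c < b -> op_step (fun x => minn (V x) b) op c c' -> op_step V op c c'.
Proof. by case: op => [||||x|x] //= lt_cb [tst ->]; split=> //; lia. Qed.

Lemma run_upto_truncate (Q X : finType) (A : OCAPT Q X) (V : valuation X) b r :
  (r 0).2 = 0 -> run_upto A (fun x => minn (V x) b) r b -> run_upto A V r b.
Proof.
move=> r0 run t lt_tb; have [op [trans opst]] := run t lt_tb; exists op; split=> //.
by apply: op_step_truncate opst; have := run_counter_le r0 run (ltnW lt_tb); lia.
Qed.

Lemma pump_bound_lt_size (Q X : finType) (A : OCAPT Q X) :
  pump_bound Q X < (ocapt_size A).+1 ^ 3.
Proof.
set S := (ocapt_size A).+1.
have [ltQ ltX] : #|Q| < S /\ #|X| < S by rewrite /S /ocapt_size; lia.
rewrite /pump_bound !expnS expn0 muln1.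
have sq : #|Q| * #|Q|.+2 < S * S by nia.
have := leq_mul (leq_mul ltX (leqnn #|Q|.+2)) (leqnn #|Q|); nia.
Qed.

Theorem lemma22 :
  exists c : nat,
  forall (Q X : finType) (A : OCAPT Q X) (q0 : Q) (F : {set Q}),
    (exists V : valuation X, all_inf_runs_reach A V q0 F) ->
    exists V' : valuation X,
      (forall x : X, V' x <= 2 ^ ((ocapt_size A).+1 ^ c)) /\
      all_inf_runs_reach A V' q0 F.
Proof.
exists 3 => Q X A q0 F [V all_reach]; set N := pump_bound Q X.
exists (fun x => minn (V x) N.+1); split.
  move=> x; apply: leq_trans (geq_minr _ _) _; apply: leq_trans (pump_bound_lt_size A) _.
  exact/ltnW/ltn_expl.
move=> r [r0 run]; case: (boolP [exists t : 'I_N.+1, (r t).1 \in F]) => [/existsP[t inF]|].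
  by exists t.
rewrite negb_exists => /forallP avoid; exfalso.
apply: (not_all_reach_of_avoiding_prefix r0 _ _ all_reach) => [|t le_tN].
  apply: run_upto_le (leqnSn N) (run_upto_truncate (congr1 snd r0) _) => t _; exact: run.
by apply: avoid (Ordinal (le_tN : t < N.+1)).
Qed.
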